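(* Let $f:X\to Y$ be a continuous surjective open map between compact Hausdorff spaces. Then $Hf:HX\to HY$ has a degenerate fiber (a fiber $(Hf)^{-1}(\nu)$ that is a single point) if and only if $f$ has a degenerate fiber (a fiber $f^{-1}(y)$ that is a single point).
   Context: For a compact Hausdorff space $X$, let $HM(X)$ be the set of all maps $\alpha:[0,1)\to X$ for which there exist $0=t_0<t_1<\dots<t_n=1$ such that $\alpha$ is constant on each $[t_i,t_{i+1})$. Let $C(X)$ be the set of continuous real-valued functions on $X$. For $\varphi\in C(X)$ and $0\le a<b\le 1$ define $\varphi_{(a,b)}:HM(X)\to\mathbb{R}$ by $\varphi_{(a,b)}(\alpha)=\frac{1}{b-a}\int_a^b\varphi(\alpha(t))\,dt$, and let $S_{HM}(X)$ be the set of all such functions. The map $\alpha\mapsto(\varphi_{(a,b)}(\alpha))$ embeds $HM(X)$ into the product $\prod_{\varphi_{(a,b)}\in S_{HM}(X)}[\min\varphi,\max\varphi]$; $HX$ is the closure of the image of $HM(X)$, and $p_{\varphi_{(a,b)}}:HX\to\mathbb{R}$ is the coordinate projection. For continuous $f:X\to Y$, $Hf:HX\to HY$ is the unique continuous map with $p_{\varphi_{(a,b)}}\circ Hf=p_{(\varphi\circ f)_{(a,b)}}$ for all $\varphi\in C(Y)$, $0\le a<b\le1$ (it extends $\alpha\mapsto f\circ\alpha$). *)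

From HB Require Import structures.
From mathcomp Require Import all_boot all_order all_algebra.
From mathcomp Require Import all_classical all_reals all_analysis.
From mathcomp Require Import Rstruct Rstruct_topology.
Set Implicit Arguments. Unset Strict Implicit. Unset Printing Implicit Defensive.
Import Order.TTheory GRing.Theory Num.Theory.
Local Open Scope classical_set_scope.
Local Open Scope ring_scope.

Notation RR := Rdefinitions.R.

(* HM(X): maps alpha : [0,1) -> X that are step functions: there is a
   partition 0 = t_0 < ... < t_n = 1 with alpha constant on each [t_i,t_{i+1}).
   We represent alpha by a function RR -> X; only its values on [0,1) matter. *)
Definition is_HM (X : Type) (alpha : RR -> X) : Prop :=
  exists (n : nat) (t : nat -> RR),
    t 0%N = 0 /\ t n = 1 /\ (forall i, (i < n)%N -> t i < t i.+1) /\
    (forall i, (i < n)%N -> forall s, t i <= s < t i.+1 -> alpha s = alpha (t i)).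

Definition SHM (X : topologicalType) :=
  { p : (X -> RR) * RR * RR |
    continuous p.1.1 /\ [/\ 0 <= p.1.2, p.1.2 < p.2 & p.2 <= 1] }.

Definition avg (X : topologicalType) (phi : X -> RR) (a b : RR) (alpha : RR -> X) : RR :=
  (b - a)^-1 * Rintegral (@lebesgue_measure RR) `[a, b] (fun t => phi (alpha t)).

Definition Hembed (X : topologicalType) (alpha : RR -> X) : {ptws SHM X -> RR} :=
  fun i => avg (sval i).1.1 (sval i).1.2 (sval i).2 alpha.

(* Since each factor
   [min phi, max phi] is closed in R and contains the image, this equals the
   closure taken inside prod [min phi, max phi]. *)
Definition HX (X : topologicalType) : set {ptws SHM X -> RR} :=
  closure [set Hembed alpha | alpha in is_HM (X:=X)].

Definition SHM_map (X Y : topologicalType) (f : X -> Y) (hf : continuous f)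
  (i : SHM Y) : SHM X :=
  let: exist p hp := i in
  exist _ (p.1.1 \o f, p.1.2, p.2)
    (conj (fun x => continuous_comp (hf x) (proj1 hp (f x))) (proj2 hp)).

Definition Hf (X Y : topologicalType) (f : X -> Y) (hf : continuous f)
  (nu : {ptws SHM X -> RR}) : {ptws SHM Y -> RR} :=
  fun i => nu (SHM_map hf i).
Arguments HX : clear implicits.

(* If f^-1(y) = {x}, the point of HX over the constant path at y can only be
   the constant path at x: a coordinate of such a point is squeezed between
   psi(x) -+ e by a Urysohn function that vanishes at y and is 1 on the image
   of {z | e <= |psi z - psi x|}.

   Conversely let mu be the unique point of HX over some nu, and suppose every
   fiber of f has two points.  For any s : X -> X with f o s = f, a cluster point
   of the paths s o alpha (alpha -> mu) lies over nu as well, hence is mu; so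
   mu does not see the difference between psi and psi o s.  Choosing for s a
   selection of maxima, resp. minima, of a Urysohn function u on the fibers
   (continuous because f is open) gives functions o_x >= 0 with o_x(x) > 1 and
   mu(o_x) = 0.  Finitely many o_x sum to a function >= 1, whose mu-coordinate
   is nevertheless 0. *)
From HB Require Import structures.
From mathcomp Require Import all_boot all_order all_algebra.
From mathcomp Require Import all_classical all_reals all_analysis.
From mathcomp Require Import Rstruct Rstruct_topology.
From mathcomp Require Import lra ring.
Set Implicit Arguments. Unset Strict Implicit. Unset Printing Implicit Defensive.
Import Order.TTheory GRing.Theory Num.Theory.
Local Open Scope classical_set_scope.
Local Open Scope ring_scope.

Notation lebesgue := (@lebesgue_measure RR).
Notation MR := (measurableTypeR RR).

Section StepFunction.
Variables (X : Type) (alpha : RR -> X) (n : nat) (t : nat -> RR).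
Hypotheses (t0 : t 0%N = 0) (tn : t n = 1)
  (tcst : forall i, (i < n)%N -> forall s, t i <= s < t i.+1 -> alpha s = alpha (t i)).

Lemma step_index s : 0 <= s < 1 -> exists2 i, (i < n)%N & t i <= s < t i.+1.
Proof.
move=> /andP[s0 s1].
suff : forall k, (k <= n)%N -> t (n - k)%N <= s ->
    exists2 i, (i < n)%N & t i <= s < t i.+1.
  by move/(_ n (leqnn n)); rewrite subnn t0; apply.
elim=> [|k IH] kn hk; first by move: hk; rewrite subn0 tn leNgt s1.
have [hs|hs] := leP (t (n - k)%N) s; first exact: IH (ltnW kn) hs.
have Sk : ((n - k.+1).+1 = n - k)%N by rewrite subnS prednK // subn_gt0.
exists (n - k.+1)%N; last by rewrite Sk hk.
by rewrite -ltnS Sk ltnS leq_subr.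
Qed.

(* The last piece is the point 1, so that the pieces cover the closed interval. *)
Definition step_piece (i : nat) : set MR :=
  if (i < n)%N then [set` `[t i, t i.+1[] else [set 1].

Lemma measurable_step_piece i : measurable (step_piece i).
Proof. by rewrite /step_piece; case: ifP => _ //; exact: measurable_itv. Qed.

Lemma step_piece_cover : ([set` `[0, 1]] : set MR) `<=` \bigcup_i step_piece i.
Proof.
move=> s; rewrite /= in_itv /= => /andP[s0 s1].
have [->|s_neq1] := eqVneq s 1; first by exists n; rewrite /step_piece ?ltnn.
have [i ilt hi] : exists2 i, (i < n)%N & t i <= s < t i.+1.
  by apply: step_index; rewrite s0 lt_neqAle s_neq1 s1.
by exists i => //; rewrite /step_piece ilt /= in_itv.
Qed.

Lemma step_measurable (g : X -> RR) :
  measurable_fun ([set` `[0, 1]] : set MR) ((g \o alpha) : MR -> MR).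
Proof.
apply: (measurable_funS _ step_piece_cover).
  by apply: bigcupT_measurable => i; exact: measurable_step_piece.
apply/(measurable_fun_bigcup (E:=step_piece) _ measurable_step_piece) => i.
rewrite /step_piece; case: ifPn => ilt.
  apply: (@eq_measurable_fun _ _ MR MR _ (cst (g (alpha (t i))))).
    by move=> s; rewrite inE /= in_itv /= => hs; rewrite (tcst ilt hs).
  exact: measurable_cst.
apply: (@eq_measurable_fun _ _ MR MR _ (cst (g (alpha 1)))).
  by move=> s; rewrite inE /= => ->.
exact: measurable_cst.
Qed.

Lemma step_bounded (g : X -> RR) :
  exists B, forall s, 0 <= s <= 1 -> `|g (alpha s)| <= B.
Proof.
exists (\sum_(i < n) `|g (alpha (t i))| + `|g (alpha 1)|) => s s01.
have sum_ge0 (P : pred 'I_n) : 0 <= \sum_(j < n | P j) `|g (alpha (t j))|.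
  by apply: sumr_ge0 => j _; exact: normr_ge0.
have /step_piece_cover [i _] : ([set` `[0, 1]] : set MR) s by rewrite /= in_itv.
rewrite /step_piece; case: ifPn => ilt; last first.
  by move=> /= ->; have := sum_ge0 predT; lra.
rewrite /= in_itv /= => /(tcst ilt) ->.
rewrite (bigD1 (Ordinal ilt)) //=.
have := sum_ge0 (predC1 (Ordinal ilt)); have := normr_ge0 (g (alpha 1)); lra.
Qed.

Lemma step_integrable (g : X -> RR) a b : 0 <= a -> b <= 1 ->
  lebesgue.-integrable ([set` `[a, b]] : set MR) (EFin \o (g \o alpha)).
Proof.
move=> a0 b1.
have ab01 s : a <= s <= b -> 0 <= s <= 1.
  by case/andP=> h1 h2; rewrite (le_trans a0 h1) (le_trans h2 b1).
apply: measurable_bounded_integrable.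
- exact: measurable_itv.
- rewrite /= lebesgue_measure_itv /=; case: ifP => _ //; exact: ltry.
- apply: (measurable_funS _ _ (step_measurable g)); first exact: measurable_itv.
  by move=> s; rewrite /= !in_itv /=; exact: ab01.
- have [B hB] := step_bounded g; exists B; split; first exact: num_real.
  move=> M BM s; rewrite /= in_itv /= => /ab01/hB hs.
  exact: le_trans hs (ltW BM).
Qed.

End StepFunction.

Lemma HM_integrable (X : Type) (alpha : RR -> X) (g : X -> RR) a b :
  is_HM alpha -> 0 <= a -> b <= 1 ->
  lebesgue.-integrable ([set` `[a, b]] : set MR) (EFin \o (fun s => g (alpha s))).
Proof. by move=> [n [t [t0 [tn [_ tcst]]]]]; exact: (step_integrable t0 tn tcst). Qed.

Lemma HM_cst (X : Type) (x : X) : is_HM (fun _ : RR => x).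
Proof.
exists 1%N, (fun i => i%:R); rewrite /= mulr0n mulr1n; do 2 split => //.
by split=> // i; rewrite ltnS leqn0 => /eqP ->; rewrite /= mulr0n mulr1n ltr01.
Qed.

Lemma HM_comp (X Y : Type) (s : X -> Y) (alpha : RR -> X) :
  is_HM alpha -> is_HM (s \o alpha).
Proof.
move=> [n [t [t0 [tn [tinc tcst]]]]]; exists n, t; do 3 split => //.
by move=> i ilt u hu /=; rewrite (tcst i ilt u hu).
Qed.

Section Average.
Variables (X : topologicalType) (alpha : RR -> X).

Lemma avg_lincomb (g1 g2 : X -> RR) c1 c2 a b : is_HM alpha -> 0 <= a -> b <= 1 ->
  avg (fun x => c1 * g1 x + c2 * g2 x) a b alpha =
  c1 * avg g1 a b alpha + c2 * avg g2 a b alpha.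
Proof.
move=> hal a0 b1; rewrite /avg RintegralD; first last.
- exact: (HM_integrable (fun x => c2 * g2 x)).
- exact: (HM_integrable (fun x => c1 * g1 x)).
- exact: measurable_itv.
rewrite !RintegralZl; first ring.
all: by [exact: measurable_itv | exact: HM_integrable].
Qed.

Lemma ler_avg (g1 g2 : X -> RR) a b :
  is_HM alpha -> 0 <= a -> a < b -> b <= 1 -> (forall x, g1 x <= g2 x) ->
  avg g1 a b alpha <= avg g2 a b alpha.
Proof.
move=> hal a0 ab b1 g12; apply: ler_wpM2l; first by rewrite invr_ge0 subr_ge0 ltW.
apply: (@le_Rintegral _ MR RR lebesgue); last by move=> *; exact: g12.
all: by [exact: measurable_itv | exact: HM_integrable].
Qed.

Lemma avg_cst c a b : a < b -> avg (fun _ => c) a b alpha = c.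
Proof.
move=> ab; rewrite /avg Rintegral_cst; last exact: measurable_itv.
have := lebesgue_measure_itv `[a, b]; rewrite /= => ->; rewrite ifT //=.
by field; rewrite subr_eq0 gt_eqF.
Qed.

Lemma normr_avg_le (g : X -> RR) a b B :
  is_HM alpha -> 0 <= a -> a < b -> b <= 1 -> (forall x, `|g x| <= B) ->
  `|avg g a b alpha| <= B.
Proof.
move=> hal a0 ab b1 gB; rewrite ler_norml.
have [gBl gBr] : (forall x, - B <= g x) /\ (forall x, g x <= B).
  by split=> x; have := gB x; rewrite ler_norml => /andP[].
apply/andP; split.
  by rewrite -{1}(avg_cst (- B) ab); exact: ler_avg.
by rewrite -[leRHS](avg_cst B ab); exact: ler_avg.
Qed.

End Average.

Lemma avg_cst_path (X : topologicalType) (g : X -> RR) (z : X) a b :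
  a < b -> avg g a b (fun _ => z) = g z.
Proof. exact: (@avg_cst X (fun=> z) (g z)). Qed.

Lemma continuousT_comp (S T U : topologicalType) (f : S -> T) (g : T -> U) :
  continuous f -> continuous g -> continuous (g \o f).
Proof. by move=> cf cg x; exact: (@continuous_comp _ _ _ f g x (cf x) (cg (f x))). Qed.

Lemma continuous_lincomb (T : topologicalType) (g1 g2 : T -> RR) c1 c2 :
  continuous g1 -> continuous g2 -> continuous (fun x => c1 * g1 x + c2 * g2 x).
Proof.
move=> h1 h2 x; apply: (@cvgD _ RR^o).
  by apply: cvgM; [exact: cvg_cst|exact: h1].
by apply: cvgM; [exact: cvg_cst|exact: h2].
Qed.

Lemma continuous_sum (T : topologicalType) (I : Type) (r : seq I) (F : I -> T -> RR) :
  (forall i, continuous (F i)) -> continuous (fun z => \sum_(i <- r) F i z).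
Proof.
move=> cF; elim: r => [|i r IH].
  by under eq_fun do rewrite big_nil; exact: cst_continuous.
by under eq_fun do rewrite big_cons; move=> z; apply: (@cvgD _ RR^o); [exact: cF|exact: IH].
Qed.

Definition unit_itv (a b : RR) := [/\ 0 <= a, a < b & b <= 1].

Lemma unit_itv01 : unit_itv 0 1.
Proof. by split; rewrite ?ltr01. Qed.

(* The coordinate p_{g_(a,b)}, with the junk value 0 when (g, a, b) is not in
   S_HM(X). *)
Definition Hcoord (X : topologicalType) (m : {ptws SHM X -> RR}) (g : X -> RR) a b : RR :=
  match pselect (continuous g /\ unit_itv a b) with
  | left p => m (exist _ (g, a, b) p)
  | right _ => 0
  end.

Section Coordinates.
Variable X : topologicalType.
Implicit Types (m : {ptws SHM X -> RR}) (g : X -> RR).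

Lemma HcoordE m g a b p : Hcoord m g a b = m (exist _ (g, a, b) p).
Proof.
by rewrite /Hcoord; case: pselect => [q|//]; rewrite (Prop_irrelevance p q).
Qed.

Lemma Hcoord_Hembed (alpha : RR -> X) g a b :
  continuous g -> unit_itv a b -> Hcoord (Hembed alpha) g a b = avg g a b alpha.
Proof. by move=> cg ab; rewrite (HcoordE _ (conj cg ab)). Qed.

Lemma eq_Hcoord m1 m2 :
  (forall g a b, continuous g -> unit_itv a b -> Hcoord m1 g a b = Hcoord m2 g a b) ->
  m1 = m2.
Proof.
move=> m12; apply: funext => -[[[g a] b] [cg ab]].
by rewrite -(HcoordE _ (conj cg ab)) -(HcoordE _ (conj cg ab)) m12.
Qed.

(* proj_continuous is stated for an index type with decidable equality. *)
Let SHMe := SHM X.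
HB.instance Definition _ := gen_eqMixin SHMe.

Lemma continuous_proj (i : SHM X) : continuous (fun m : {ptws SHM X -> RR} => m i).
Proof. exact: (@proj_continuous SHMe (fun _ => RR) i). Qed.

Lemma continuous_Hcoord g a b :
  continuous g -> unit_itv a b -> continuous (fun m => Hcoord m g a b).
Proof.
move=> cg ab; rewrite (_ : (fun m => _) = fun m => m (exist _ (g, a, b) (conj cg ab))).
  exact: continuous_proj.
by apply: funext => m; exact: HcoordE.
Qed.

Lemma compact_box (B : SHM X -> RR) :
  compact [set m : {ptws SHM X -> RR} | forall i, `|m i| <= B i].
Proof.
apply: (@tychonoff SHMe (fun _ => RR) (fun i => [set r : RR | `|r| <= B i])) => i.
rewrite (_ : [set r : RR | `|r| <= B i] = [set` `[- B i, B i]]).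
  exact: segment_compact.
by apply/seteqP; split => r /=; rewrite in_itv /= ler_norml.
Qed.

Lemma HX_closure_ind (F : {ptws SHM X -> RR} -> RR) (C : set RR) :
  continuous F -> closed C -> (forall alpha, is_HM alpha -> C (F (Hembed alpha))) ->
  forall m, HX X m -> C (F m).
Proof.
move=> cF cC CF m Hm.
have clFC : closed (F @^-1` C) by apply: preimage_closed => // x _; exact: cF.
suff : HX X `<=` F @^-1` C by apply.
rewrite /HX ((closure_id _).1 clFC).
by apply: closureS => _ [alpha ha <-]; exact: CF.
Qed.

Lemma HX_le (F G : {ptws SHM X -> RR} -> RR) : continuous F -> continuous G ->
  (forall alpha, is_HM alpha -> F (Hembed alpha) <= G (Hembed alpha)) ->
  forall m, HX X m -> F m <= G m.
Proof.
move=> cF cG FG m Hm; rewrite -subr_ge0.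
apply: (@HX_closure_ind (fun m => G m - F m) [set r | 0 <= r]) Hm.
- by move=> m'; apply: (@cvgB _ RR^o); [exact: cG|exact: cF].
- exact: closed_ge.
by move=> alpha ha; rewrite /= subr_ge0; exact: FG.
Qed.

Lemma HX_eq (F G : {ptws SHM X -> RR} -> RR) : continuous F -> continuous G ->
  (forall alpha, is_HM alpha -> F (Hembed alpha) = G (Hembed alpha)) ->
  forall m, HX X m -> F m = G m.
Proof.
move=> cF cG FG m Hm; apply/eqP; rewrite eq_le.
by rewrite !(HX_le _ _ _ Hm) // => alpha ha; rewrite FG.
Qed.

Section PointOfHX.
Variables (m : {ptws SHM X -> RR}) (Hm : HX X m).

Lemma HX_Hcoord_lincomb g1 g2 c1 c2 a b :
  continuous g1 -> continuous g2 -> unit_itv a b ->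
  Hcoord m (fun x => c1 * g1 x + c2 * g2 x) a b = c1 * Hcoord m g1 a b + c2 * Hcoord m g2 a b.
Proof.
move=> cg1 cg2 ab.
apply: (@HX_eq (fun m => Hcoord m (fun x => c1 * g1 x + c2 * g2 x) a b)
  (fun m => c1 * Hcoord m g1 a b + c2 * Hcoord m g2 a b) _ _ _ m Hm).
- exact/continuous_Hcoord/ab/continuous_lincomb.
- by apply: continuous_lincomb; exact: continuous_Hcoord.
- move=> alpha ha; rewrite !Hcoord_Hembed //; last exact: continuous_lincomb.
  by case: ab => a0 _ b1; rewrite avg_lincomb.
Qed.

Lemma HX_Hcoord_le g1 g2 a b : continuous g1 -> continuous g2 -> unit_itv a b ->
  (forall x, g1 x <= g2 x) -> Hcoord m g1 a b <= Hcoord m g2 a b.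
Proof.
move=> cg1 cg2 ab g12.
apply: (@HX_le (fun m => Hcoord m g1 a b) (fun m => Hcoord m g2 a b) _ _ _ m Hm);
  try exact: continuous_Hcoord.
by move=> alpha ha; rewrite !Hcoord_Hembed //; case: ab => a0 ab b1; exact: ler_avg.
Qed.

Lemma HX_Hcoord_cst c a b : unit_itv a b -> Hcoord m (fun _ => c) a b = c.
Proof.
move=> ab; have cc : continuous (fun _ : X => c) by exact: cst_continuous.
apply: (@HX_eq (fun m => Hcoord m (fun=> c) a b) (fun=> c) _ _ _ m Hm).
- exact: continuous_Hcoord.
- exact: cst_continuous.
- by move=> alpha ha; rewrite Hcoord_Hembed //; case: ab => _ ab _; exact: avg_cst.
Qed.

Lemma HX_Hcoord_sum (I : Type) (r : seq I) (F : I -> X -> RR) a b :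
  (forall i, continuous (F i)) -> unit_itv a b ->
  Hcoord m (fun z => \sum_(i <- r) F i z) a b = \sum_(i <- r) Hcoord m (F i) a b.
Proof.
move=> cF ab; elim: r => [|i r IH].
  by under eq_fun do rewrite big_nil; rewrite big_nil HX_Hcoord_cst.
under eq_fun do rewrite big_cons -[F i _]mul1r -[\sum_(_ <- _) _]mul1r.
by rewrite HX_Hcoord_lincomb ?IH ?big_cons ?mul1r //; exact: continuous_sum.
Qed.

End PointOfHX.
End Coordinates.

Lemma Hcoord_Hf (X Y : topologicalType) (f : X -> Y) (hf : continuous f)
    (m : {ptws SHM X -> RR}) phi a b :
  continuous phi -> unit_itv a b -> Hcoord (Hf hf m) phi a b = Hcoord m (phi \o f) a b.
Proof.
move=> cphi ab; rewrite (HcoordE _ (conj cphi ab)) /Hf /SHM_map /=.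
rewrite (HcoordE _ (conj (continuousT_comp hf cphi) ab)).
by congr (m (exist _ _ _)); exact: Prop_irrelevance.
Qed.

Lemma continuous_bounded (X : topologicalType) (g : X -> RR) :
  compact [set: X] -> continuous g -> exists B, forall x, `|g x| <= B.
Proof.
move=> cX cg; have [[x0 _]|X0] := pselect ([set: X] !=set0); last first.
  by exists 0 => x; exfalso; apply: X0; exists x.
have cng : continuous (fun x => `|g x|).
  by move=> x; apply: continuous_comp; [exact: cg|exact: (@norm_continuous _ RR^o)].
have [c _ gc] := compact_EVT_max (f := fun x => `|g x|) (ex_intro _ x0 I) cX
  (continuous_subspaceT cng).
by exists `|g c| => x; apply: gc; rewrite inE.
Qed.

Lemma hausdorff_closed_set1 (T : topologicalType) (x : T) :
  hausdorff_space T -> closed [set x].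
Proof. by move=> hT; exact: accessible_closed_set1 (hausdorff_accessible hT) x. Qed.

Lemma compact_urysohn (T : topologicalType) (A B : set T) :
  compact [set: T] -> hausdorff_space T -> closed A -> closed B -> A `&` B = set0 ->
  exists g : T -> RR, [/\ continuous g, (forall z, 0 <= g z <= 1),
     (forall z, A z -> g z = 0) & (forall z, B z -> g z = 1)].
Proof.
move=> cT hT cA cB AB.
have := (@normal_separatorP RR T).1 (compact_normal hT cT) A B cA cB AB.
move=> /(@uniform_separatorP T RR A B).1 [g [cg g01 gA gB]].
exists g; split => // z.
- by have := g01 (g z) (ex_intro2 _ _ z I erefl); rewrite /= in_itv.
- by move=> Az; exact: gA (g z) (ex_intro2 _ _ z Az erefl).
- by move=> Bz; exact: gB (g z) (ex_intro2 _ _ z Bz erefl).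
Qed.

Section DegenerateFiber.
Variables (X Y : topologicalType) (f : X -> Y) (hf : continuous f).
Hypotheses (cX : compact [set: X]) (cY : compact [set: Y]) (hY : hausdorff_space Y).
Variables (y : Y) (x : X).
Hypothesis fib : f @^-1` [set y] = [set x].

(* phi separates y from the image of the closed set where psi is e-far from
   psi x; this image does not contain y because x is the only point over y. *)
Lemma degenerate_fiber_control (psi : X -> RR) B e :
  continuous psi -> (forall z, `|psi z| <= B) -> 0 < e ->
  exists phi : Y -> RR, [/\ continuous phi, phi y = 0 &
    forall z, `|psi z - psi x| <= e + 2 * B * phi (f z)].
Proof.
move=> cpsi psiB e0; pose K := [set z | e <= `|psi z - psi x|].
have cK : closed K.
  apply: (@preimage_closed _ _ (fun z => `|psi z - psi x|) [set r | e <= r]).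
    move=> z _.
    apply: (@continuous_comp _ _ _ (fun z => psi z - psi x) (fun r : RR^o => `|r|)).
      exact: (@cvgB _ RR^o _ _ _ psi (fun=> psi x) _ _ (cpsi z) (cvg_cst _)).
    exact: (@norm_continuous _ RR^o).
  exact: closed_ge.
have cfK : closed (f @` K).
  apply: compact_closed => //; apply: continuous_compact.
    exact: continuous_subspaceT.
  exact: subclosed_compact cK cX _.
have yfK : [set y] `&` f @` K = set0.
  apply/seteqP; split => // _ [/= -> [z Kz fz]].
  have : (f @^-1` [set y]) z by [].
  rewrite fib /= => zx; move: Kz; rewrite /K /= zx subrr normr0.
  by rewrite leNgt e0.
have [phi [cphi phi01 phi0 phi1]] :=
  compact_urysohn cY hY (hausdorff_closed_set1 (x := y) hY) cfK yfK.
have B0 : 0 <= B by apply: le_trans (psiB x).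
exists phi; split => //; first exact: phi0.
move=> z; have [Kz|] := pselect (K z).
  rewrite phi1; last by exists z.
  have := psiB z; have := psiB x; have := ler_normB (psi z) (psi x); lra.
rewrite /K /= => /negP; rewrite -ltNge => psize.
have : 0 <= 2 * B * phi (f z) by case/andP: (phi01 (f z)) => *; rewrite !mulr_ge0.
lra.
Qed.

Lemma HX_Hcoord_degenerate_fiber (m : {ptws SHM X -> RR}) psi a b :
  HX X m -> Hf hf m = Hembed (fun _ => y) -> continuous psi -> unit_itv a b ->
  Hcoord m psi a b = psi x.
Proof.
move=> Hm Hfm cpsi ab; apply/eqP; rewrite -subr_eq0 -normr_eq0 eq_le normr_ge0 andbT.
apply/ler_addgt0Pr => e e0; rewrite add0r.
have [B psiB] := continuous_bounded cX cpsi.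
have [phi [cphi phiy psi_phi]] := degenerate_fiber_control cpsi psiB e0.
have cphif := continuousT_comp hf cphi.
have c1 : continuous (fun _ : X => 1 : RR) by exact: cst_continuous.
have Hcoord_phif : Hcoord m (phi \o f) a b = 0.
  rewrite -Hcoord_Hf // Hfm Hcoord_Hembed //; case: ab => _ ab _.
  by rewrite avg_cst_path.
have Hcoord1 : Hcoord m (fun _ => 1) a b = 1 by exact: HX_Hcoord_cst.
have up : Hcoord m psi a b <=
    (psi x + e) * Hcoord m (fun _ => 1) a b + (2 * B) * Hcoord m (phi \o f) a b.
  rewrite -HX_Hcoord_lincomb //; apply: HX_Hcoord_le => //; first exact: continuous_lincomb.
  by move=> z /=; have := psi_phi z; rewrite ler_norml => /andP[_]; lra.
have lo : (psi x - e) * Hcoord m (fun _ => 1) a b + (- (2 * B)) * Hcoord m (phi \o f) a b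
    <= Hcoord m psi a b.
  rewrite -HX_Hcoord_lincomb //; apply: HX_Hcoord_le => //; first exact: continuous_lincomb.
  by move=> z /=; have := psi_phi z; rewrite ler_norml => /andP[]; lra.
by move: up lo; rewrite Hcoord_phif Hcoord1 ler_norml; lra.
Qed.

Lemma Hf_degenerate_fiber :
  exists nu, HX Y nu /\ exists mu, [set m | HX X m /\ Hf hf m = nu] = [set mu].
Proof.
have fx : f x = y by have : (f @^-1` [set y]) x by rewrite fib.
have HX_cst_path (Z : topologicalType) (z : Z) : HX Z (Hembed (fun _ => z)).
  by apply: subset_closure; exists (fun _ => z) => //; exact: HM_cst.
exists (Hembed (fun _ => y)); split => //.
exists (Hembed (fun _ => x)); apply/seteqP; split => m /=.
  move=> [Hm Hfm]; apply: eq_Hcoord => g a b cg ab.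
  rewrite (HX_Hcoord_degenerate_fiber Hm Hfm cg ab) Hcoord_Hembed //.
  by case: ab => _ ab _; rewrite avg_cst_path.
move=> ->; split => //; apply: eq_Hcoord => g a b cg ab.
have cgf := continuousT_comp hf cg.
rewrite Hcoord_Hf // !Hcoord_Hembed //.
by case: ab => _ ab _; rewrite !avg_cst_path //= fx.
Qed.

End DegenerateFiber.

Section FiberExtrema.
Variables (X Y : topologicalType) (f : X -> Y) (hf : continuous f).
Hypotheses (cX : compact [set: X]) (hY : hausdorff_space Y).

Lemma fiber_argmax (psi : X -> RR) : continuous psi ->
  exists s : X -> X, forall x, f (s x) = f x /\ forall z, f z = f x -> psi z <= psi (s x).
Proof.
move=> cpsi.
suff [s hs] : {s : X -> X & forall x,
    f (s x) = f x /\ forall z, f z = f x -> psi z <= psi (s x)} by exists s.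
apply: (@choice X X (fun x sx => f sx = f x /\ forall z, f z = f x -> psi z <= psi sx)).
move=> x; pose A := f @^-1` [set f x].
have cA : closed A.
  by apply: preimage_closed; [move=> z _; exact: hf|exact: hausdorff_closed_set1].
have [c Ac psic] := compact_EVT_max (f := psi) (ex_intro _ x erefl)
  (subclosed_compact cA cX (subsetT _)) (continuous_subspaceT cpsi).
by exists c; split=> [|z fz]; [move: Ac; rewrite inE|apply: psic; rewrite inE].
Qed.

(* Openness of f gives lower semicontinuity of the fiberwise maximum;
   compactness of X gives upper semicontinuity. *)
Lemma continuous_fiber_max (psi : X -> RR) (s : X -> X) :
  (forall A : set X, open A -> open (f @` A)) -> continuous psi ->
  (forall x, f (s x) = f x /\ forall z, f z = f x -> psi z <= psi (s x)) ->
  continuous (psi \o s).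
Proof.
move=> fopen cpsi hs x0; apply/(@cvgrPdist_lt _ RR^o) => e e0.
set M0 := psi (s x0).
have near_lo : nbhs x0 (f @^-1` (f @` (psi @^-1` [set r | M0 - e < r]))).
  apply: open_nbhs_nbhs; split.
    apply: open_comp; [move=> z _; exact: hf|apply: fopen].
    by apply: open_comp; [move=> z _; exact: cpsi|exact: open_gt].
  by exists (s x0); [rewrite /= ltrBlDr ltrDl|exact: (hs x0).1].
pose K := psi @^-1` [set r | M0 + e <= r].
have cK : closed K by apply: preimage_closed; [move=> z _; exact: cpsi|exact: closed_ge].
have near_up : nbhs x0 (f @^-1` (~` (f @` K))).
  apply: open_nbhs_nbhs; split.
    apply: open_comp; [move=> z _; exact: hf|apply: closed_openC].
    apply: compact_closed => //; apply: continuous_compact.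
      exact: continuous_subspaceT.
    exact: subclosed_compact cK cX _.
  move=> [k Kk fk]; have := (hs x0).2 k fk; rewrite -/M0.
  by move: Kk; rewrite /K /=; move=> /le_trans h/h; rewrite gerDl leNgt e0.
apply: filterS (filterI near_lo near_up) => z [[v psiv fv] nKz] /=.
have lo : M0 - e < psi (s z) by apply: lt_le_trans psiv _; exact: (hs z).2.
have up : psi (s z) < M0 + e.
  by rewrite ltNge; apply/negP => psisz; apply: nKz; exists (s z) => //; exact: (hs z).1.
by rewrite -/M0 ltr_norml; apply/andP; split; lra.
Qed.

End FiberExtrema.

Lemma Hembed_bounded (X : topologicalType) : compact [set: X] ->
  exists B : SHM X -> RR, forall i alpha, is_HM alpha -> `|Hembed alpha i| <= B i.
Proof.
move=> cX.
suff [B hB] : {B : SHM X -> RR & forall i alpha, is_HM alpha -> `|Hembed alpha i| <= B i}.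
  by exists B.
apply: (@choice (SHM X) RR (fun i c => forall alpha, is_HM alpha -> `|Hembed alpha i| <= c)).
move=> [[[g a] b] [cg [a0 ab b1]]]; have [B gB] := continuous_bounded cX cg.
by exists B => alpha ha; exact: normr_avg_le.
Qed.

(* A cluster point of Hembed (s o alpha) as Hembed alpha tends to mu. *)
Lemma HX_cluster (X : topologicalType) (mu : {ptws SHM X -> RR}) (s : X -> X) :
  compact [set: X] -> HX X mu ->
  exists2 mu', HX X mu' & forall j j' : SHM X,
    (forall alpha, is_HM alpha -> Hembed (s \o alpha) j = Hembed alpha j') -> mu' j = mu j'.
Proof.
move=> cX Hmu; have [B hB] := Hembed_bounded cX.
pose F := filter_from (nbhs mu) (fun U => [set alpha | is_HM alpha /\ U (Hembed alpha)]).
have PF : ProperFilter F.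
  apply: filter_from_proper; last first.
    by move=> U /Hmu [_ [[alpha ha <-] Ualpha]]; exists alpha.
  apply: filter_from_filter; first by exists setT; exact: filterT.
  move=> U V nU nV; exists (U `&` V); first exact: filterI.
  by move=> alpha [ha [hU hV]]; split; split.
pose G := (fun alpha : RR -> X => Hembed (s \o alpha)) @ F.
have G_box : G [set m : {ptws SHM X -> RR} | forall i, `|m i| <= B i].
  exists setT; first exact: filterT.
  by move=> alpha [ha _] i; apply: hB; exact: HM_comp.
have [mu' [_ clG]] := @compact_box X B G _ G_box.
exists mu'.
  move=> V nV; apply: clG nV.
  exists setT; first exact: filterT.
  by move=> alpha [ha _]; exists (s \o alpha) => //; exact: HM_comp.
move=> j j' sjj'; rewrite cluster_cvgE in clG.
have [G' PG' [G'mu' GG']] := clG.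
apply: (@cvg_unique _ (@norm_hausdorff _ RR^o) ((fun m => m j) @ G')) => //.
- by move=> W /(@continuous_proj _ j mu') /G'mu'.
- move=> W /(@continuous_proj _ j' mu) nW; apply: GG'; exists [set m | W (m j')] => //.
  by move=> alpha [ha Walpha] /=; rewrite sjj'.
Qed.

(* compact_cover is only stated for pointed spaces. *)
Definition pointed_at (T : topologicalType) (x0 : T) : Type := T.
HB.instance Definition _ (T : topologicalType) (x0 : T) :=
  Topological.copy (pointed_at x0) T.
HB.instance Definition _ (T : topologicalType) (x0 : T) :=
  isPointed.Build (pointed_at x0) x0.

Lemma compact_sum_ge1 (T : topologicalType) (o : T -> T -> RR) :
  compact [set: T] -> (forall x, continuous (o x)) -> (forall x z, 0 <= o x z) ->
  (forall x, 1 < o x x) -> exists r : seq T, forall z, 1 <= \sum_(x <- r) o x z.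
Proof.
move=> cT co o_ge0 o_gt1; have [[x0 _]|T0] := pselect ([set: T] !=set0); last first.
  by exists [::] => z; exfalso; apply: T0; exists z.
have : @cover_compact (pointed_at x0) [set: T] by rewrite -compact_cover.
move=> /(_ T [set: T] (fun x => [set z | 1 < o x z])) [].
- move=> x _; apply: (@open_comp _ _ (o x) [set r | 1 < r]); last exact: open_gt.
  by move=> z _; exact: co.
- by move=> z _; exists z => //; exact: o_gt1.
move=> D _ Dcover; exists (finmap.enum_fset D) => z.
have [x xD /= ox] := Dcover z I; rewrite (big_rem x xD) /=.
have : 0 <= \sum_(y <- rem x (finmap.enum_fset D)) o y z.
  by apply: sumr_ge0 => y _; exact: o_ge0.
lra.
Qed.

Section UniqueFiber.
Variables (X Y : topologicalType) (f : X -> Y) (hf : continuous f).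
Hypothesis cX : compact [set: X].
Variables (nu : {ptws SHM Y -> RR}) (mu : {ptws SHM X -> RR}).
Hypothesis fib : [set m | HX X m /\ Hf hf m = nu] = [set mu].

Lemma HX_unique_fiber : HX X mu.
Proof. by have [] : [set m | HX X m /\ Hf hf m = nu] mu by rewrite fib. Qed.

Lemma Hcoord_comp_fiber (psi : X -> RR) (s : X -> X) a b :
  (forall x, f (s x) = f x) -> continuous psi -> continuous (psi \o s) ->
  unit_itv a b -> Hcoord mu (psi \o s) a b = Hcoord mu psi a b.
Proof.
move=> fs cpsi cpsis ab; have [mu' Hmu' mu'E] := HX_cluster s cX HX_unique_fiber.
have mu'_mu : mu' = mu.
  suff : [set m | HX X m /\ Hf hf m = nu] mu' by rewrite fib.
  have [_ <-] : [set m | HX X m /\ Hf hf m = nu] mu by rewrite fib.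
  split => //; apply: eq_Hcoord => phi a' b' cphi ab'.
  rewrite !Hcoord_Hf // !(HcoordE _ (conj (continuousT_comp hf cphi) ab')).
  apply: mu'E => alpha _; rewrite /Hembed /= /avg.
  by congr (_ * Rintegral _ _ _); apply: funext => t /=; rewrite fs.
rewrite (HcoordE _ (conj cpsi ab)) (HcoordE _ (conj cpsis ab)) -{2}mu'_mu.
by apply/esym/mu'E.
Qed.

Hypotheses (hX : hausdorff_space X) (hY : hausdorff_space Y)
  (fopen : forall A : set X, open A -> open (f @` A)).

(* With u = 0 at x and 1 at x', o is twice the oscillation of u on fibers. *)
Lemma fiber_oscillator (x x' : X) : x' != x -> f x' = f x ->
  exists o : X -> RR,
    [/\ continuous o, forall z, 0 <= o z, 1 < o x & Hcoord mu o 0 1 = 0].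
Proof.
move=> x'x fx'.
have xx' : [set x] `&` [set x'] = set0.
  by apply/seteqP; split => // z [/= -> zx']; move: x'x; rewrite zx' eqxx.
have [u [cu _ u0 u1]] := compact_urysohn cX hX
  (hausdorff_closed_set1 (x := x) hX) (hausdorff_closed_set1 (x := x') hX) xx'.
pose psi1 : X -> RR := fun z => 2 * u z; pose psi2 : X -> RR := fun z => - 2 * u z.
have cpsi1 : continuous psi1 by move=> z; apply: cvgM; [exact: cvg_cst|exact: cu].
have cpsi2 : continuous psi2 by move=> z; apply: cvgM; [exact: cvg_cst|exact: cu].
have [s1 hs1] := fiber_argmax hf cX hY cpsi1.
have [s2 hs2] := fiber_argmax hf cX hY cpsi2.
have cs1 := continuous_fiber_max hf cX hY fopen cpsi1 hs1.
have cs2 := continuous_fiber_max hf cX hY fopen cpsi2 hs2.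
exists (fun z => 1 * (psi1 \o s1) z + 1 * (psi2 \o s2) z); split.
- exact: continuous_lincomb.
- move=> z; have := (hs1 z).2 z erefl; have := (hs2 z).2 z erefl.
  by rewrite /psi1 /psi2 /=; lra.
- have := (hs1 x).2 x' fx'; have := (hs2 x).2 x erefl.
  by rewrite /psi1 /psi2 /= (u0 x) // (u1 x') //; lra.
have Hmu := HX_unique_fiber.
have fs1 z : f (s1 z) = f z by case: (hs1 z).
have fs2 z : f (s2 z) = f z by case: (hs2 z).
rewrite (HX_Hcoord_lincomb Hmu) // !Hcoord_comp_fiber // -(HX_Hcoord_lincomb Hmu) //.
under eq_fun do rewrite /psi1 /psi2 !mul1r -mulrDl subrr mul0r.
exact: HX_Hcoord_cst.
Qed.

Lemma degenerate_fiber_of_Hf : exists y x, f @^-1` [set y] = [set x].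
Proof.
apply: contrapT => nodeg.
have twin x : exists2 x', x' != x & f x' = f x.
  apply: contrapT => no_twin; apply: nodeg; exists (f x), x.
  apply/seteqP; split => [z /= fz|_ ->] //.
  by apply: contrapT => /eqP zx; apply: no_twin; exists z.
have [osc ho] := choice (fun x => let: ex_intro2 x' x'x fx' := twin x in
  fiber_oscillator x'x fx').
have co x : continuous (osc x) by case: (ho x).
have [r r_ge1] : exists r : seq X, forall z, 1 <= \sum_(x <- r) osc x z.
  by apply: compact_sum_ge1 => // x; case: (ho x).
have c1 : continuous (fun _ : X => 1 : RR) by exact: cst_continuous.
have := HX_Hcoord_le HX_unique_fiber c1 (continuous_sum (r := r) co) unit_itv01 r_ge1.
rewrite HX_Hcoord_cst //; last exact: HX_unique_fiber.
rewrite HX_Hcoord_sum //; last exact: HX_unique_fiber.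
by rewrite big1 ?ler10 // => x _; case: (ho x).
Qed.

End UniqueFiber.

Local Close Scope ring_scope.

Theorem lemma4p1 (X Y : topologicalType) (f : X -> Y) (hf : continuous f) :
  compact [set: X] -> hausdorff_space X ->
  compact [set: Y] -> hausdorff_space Y ->
  (forall y : Y, exists x : X, f x = y) ->
  (forall A : set X, open A -> open (f @` A)) ->
  ((exists nu, HX Y nu /\
      exists mu, [set m | HX X m /\ Hf hf m = nu] = [set mu])
   <->
   (exists y : Y, exists x : X, f @^-1` [set y] = [set x])).
Proof.
move=> cX hX cY hY _ fopen; split.
  by move=> [nu [_ [mu fib]]]; exact: (degenerate_fiber_of_Hf cX fib hX hY fopen).
by move=> [y [x fib]]; exact: Hf_degenerate_fiber hf cX cY hY _ _ fib.
Qed.
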